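(* Let $K$ be a field with $\operatorname{char}(K)=0$ and $a\in K$, $a\neq 0$. If $n\geq 4$, there exist two distinct critical points of $D_n(x,a)$ with equal critical values. If $n\geq 6$, there exist three distinct critical points of $D_n(x,a)$ with equal critical values.
   Context: The $n$-th Dickson polynomial with parameter $a$ is $D_n(x,a)=\sum_{j=0}^{\lfloor n/2\rfloor}\frac{n}{n-j}\binom{n-j}{j}(-a)^jx^{n-2j}$. Critical points are the roots of the derivative (in $\overline{K}$), critical values are the values of the polynomial at them. *)

From mathcomp Require Import all_boot all_order all_algebra.
Set Implicit Arguments. Unset Strict Implicit. Unset Printing Implicit Defensive.
Import GRing.Theory.
Local Open Scope ring_scope.

Definition dickson (K : fieldType) (n : nat) (a : K) : {poly K} :=
  \sum_(j < n./2.+1)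
     ((n%:R / (n - j)%:R) * ('C(n - j, j))%:R * (- a) ^+ j) *: 'X^(n - 2 * j).

From HB Require Import structures.
From mathcomp Require Import all_boot all_order all_algebra all_field.
From mathcomp Require Import ring zify.
Set Implicit Arguments. Unset Strict Implicit. Unset Printing Implicit Defensive.
Import GRing.Theory.
Local Open Scope ring_scope.

(* The Dickson polynomial D = D_n(x, a) solves the Chebyshev-type equation
   (x^2 - 4a) y'' + x y' - n^2 y = 0.  Hence Q = (x^2 - 4a) D'^2 - n^2 D^2 has
   derivative 2 D' ((x^2 - 4a) D'' + x D' - n^2 D) = 0 and is a constant c,
   nonzero when a != 0 since exactly one of D(0), D'(0) vanishes.  At a critical
   point z this gives D(z)^2 = -c / n^2, so D has at most two critical values,
   the square roots of -c / n^2.  The equation also forbids D'(z) = D''(z) = 0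
   (it would force D(z) = 0 and c = 0), so D' has n - 1 distinct roots, and
   among 2m - 1 of them some m share a critical value. *)

Lemma mul_bin_shift m j :
  ((m.+1 - j) * (m - j) * 'C(m.+1, j) = j.+1 * m.+1 * 'C(m, j.+1))%N.
Proof.
have := mul_bin_down m.+1 j; rewrite /= => bin_down.
rewrite [RHS]mulnAC mul_bin_left -[RHS]mulnA (mulnC 'C(m, j)) bin_down.
by rewrite mulnA (mulnC (m - j)%N).
Qed.

Section DicksonOperator.
Variables (F : fieldType) (a : F) (n : nat).

Definition dickson_op (p : {poly F}) : {poly F} :=
  ('X^2 - (4 * a)%:P) * p^`()^`() + 'X * p^`() - (n * n)%:R *: p.

Fact dickson_op_is_semilinear : semilinear dickson_op.
Proof.
by split=> [c p|p q]; rewrite /dickson_op ?derivZ ?derivD -!mul_polyC; ring.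
Qed.
HB.instance Definition _ := GRing.isSemilinear.Build F {poly F} {poly F} _
  dickson_op dickson_op_is_semilinear.

Lemma dickson_op_Xn k : dickson_op 'X^k =
  ((k * k)%:R - (n * n)%:R) *: 'X^k - (4 * a * (k * k.-1)%:R) *: 'X^(k.-2).
Proof.
rewrite /dickson_op !derivXn !derivMn derivXn -!mul_polyC.
case: k => [|[|k]] /=; rewrite ?deriv0 ?mulr0n; try ring.
rewrite !exprS; ring.
Qed.

Definition dickson_invariant (p : {poly F}) : {poly F} :=
  ('X^2 - (4 * a)%:P) * p^`() ^+ 2 - (n * n)%:R *: p ^+ 2.

Lemma deriv_dickson_invariant p :
  (dickson_invariant p)^`() = 2%:R *: (p^`() * dickson_op p).
Proof.
rewrite /dickson_invariant /dickson_op !expr2 !(derivB, derivD, derivM, derivZ).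
by rewrite derivX derivC -!mul_polyC; ring.
Qed.
End DicksonOperator.

Lemma deriv_eq0_polyC (R : idomainType) (p : {poly R}) :
  [pchar R] =i pred0 -> p^`() = 0 -> p = (p`_0)%:P.
Proof.
move=> charR0 p'0; apply/polyP => -[|i]; rewrite coefC //=.
have /eqP := coef_deriv p i; rewrite p'0 coef0 eq_sym -mulr_natr mulf_eq0.
by rewrite ((pcharf0P R).1 charR0) orbF => /eqP.
Qed.

Section DicksonChar0.
Variables (F : fieldType) (a : F) (n : nat).
Hypothesis charF0 : [pchar F] =i pred0.

Let natrF_eq0 := (pcharf0P F).1 charF0.

Definition dickson_coef j : F := n%:R / (n - j)%:R * 'C(n - j, j)%:R * (- a) ^+ j.

Lemma dicksonE : dickson n a = \sum_(j < n./2.+1) dickson_coef j *: 'X^(n - 2 * j).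
Proof. by []. Qed.

Lemma coef_dickson i :
  (dickson n a)`_i = \sum_(j < n./2.+1 | (n - 2 * j == i)%N) dickson_coef j.
Proof. by rewrite dicksonE coef_sumMXn. Qed.

(* The coefficient of 'X^(n - 2 * j.+1) in dickson_op a n (dickson n a) vanishes,
   cf. dickson_op_Xn. *)
Lemma dickson_coef_rec j : (j < n./2)%N ->
  dickson_coef j.+1 * (((n - 2 * j.+1) * (n - 2 * j.+1))%:R - (n * n)%:R) =
  dickson_coef j * (4 * a * ((n - 2 * j) * (n - 2 * j).-1)%:R).
Proof.
move=> lt_j_half; have [t def_n] : exists t, n = (j.+2 + j + t)%N.
  by exists (n - (j.+2 + j))%N; have := leq_half_double j.+1 n; lia.
have [u def_u] : exists u, u = (j.+1 + t)%N by exists (j.+1 + t)%N.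
have bin_rec : (t.+2 * t.+1 * 'C(u.+1, j))%:R = (j.+1 * u.+1 * 'C(u, j.+1))%:R :> F.
  rewrite -mul_bin_shift.
  by have [-> ->] : (u.+1 - j = t.+2)%N /\ (u - j = t.+1)%N by lia.
rewrite /dickson_coef.
have [-> -> -> ->] : [/\ n - j.+1 = u, n - j = u.+1, n - 2 * j.+1 = t & n - 2 * j = t.+2]%N.
  by split; lia.
rewrite [RHS](_ : _ = n%:R / u.+1%:R * (- a) ^+ j * (4 * a) *
  (t.+2 * t.+1 * 'C(u.+1, j))%:R) /=; last by rewrite !natrM; ring.
rewrite bin_rec def_n def_u !natrM exprS.
by field; rewrite nat1r -natrD nat1r !natrF_eq0.
Qed.

Lemma dickson_ode : dickson_op a n (dickson n a) = 0.
Proof.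
rewrite dicksonE linear_sum.
under eq_bigr => j _ do rewrite linearZ /= dickson_op_Xn scalerBr !scalerA.
rewrite sumrB big_ord_recl big_ord_recr /= muln0 subn0 subrr mulr0 scale0r add0r.
have -> : ((n - 2 * n./2) * (n - 2 * n./2).-1 = 0)%N.
  by have := odd_double_half n; case: (odd n) => /=; lia.
rewrite mulr0 mulr0 scale0r addr0; apply/eqP; rewrite subr_eq0; apply/eqP.
apply: eq_bigr => j _; rewrite /bump leq0n add1n dickson_coef_rec //.
by rewrite (_ : n - 2 * j.+1 = (n - 2 * j).-2)%N //; lia.
Qed.

Lemma coef_dickson_gt i : (n < i)%N -> (dickson n a)`_i = 0.
Proof. by move=> lt_n_i; rewrite coef_dickson big_pred0 // => j; apply/eqP; lia. Qed.

Lemma coef_dickson_deg : (0 < n)%N -> (dickson n a)`_n = 1.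
Proof.
move=> n_gt0; rewrite coef_dickson (bigD1 ord0) /=; last by rewrite muln0 subn0.
rewrite big1 ?addr0 => [|j /andP[/eqP nj_n /eqP j_neq0]]; last first.
  by exfalso; apply: j_neq0; apply: val_inj => /=; lia.
by rewrite /dickson_coef subn0 bin0 expr0 !mulr1 divff // natrF_eq0 -lt0n.
Qed.

Lemma coef_dickson_low i : (i <= 1)%N ->
  (dickson n a)`_i = if i == odd n then dickson_coef n./2 else 0.
Proof.
move=> le_i_1; have n_half := odd_double_half n; rewrite coef_dickson.
case: eqP => [i_odd|i_nodd].
  rewrite (bigD1 ord_max) /=; last by apply/eqP; move: i_odd n_half; case: (odd n) => /=; lia.
  rewrite big1 ?addr0 // => j /andP[/eqP nj_i /eqP j_neq_max]; exfalso.
  apply: j_neq_max; apply: val_inj => /=; have := ltn_ord j.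
  by move: i_odd n_half nj_i; case: (odd n) => /=; lia.
rewrite big_pred0 // => j; apply/eqP => nj_i; have := ltn_ord j.
by move: i_nodd n_half nj_i; case: (odd n) => /=; lia.
Qed.

Lemma dickson_coef_neq0 j : a != 0 -> (0 < n)%N -> (j <= n./2)%N -> dickson_coef j != 0.
Proof.
move=> a_neq0 n_gt0 le_j_half; have := leq_half_double j n.
rewrite /dickson_coef !mulf_neq0 ?expf_neq0 ?oppr_eq0 ?invr_eq0 ?natrF_eq0 //; try lia.
by rewrite -lt0n bin_gt0; lia.
Qed.

Lemma size_deriv_dickson : (0 < n)%N -> size (dickson n a)^`() = n.
Proof.
move=> n_gt0; apply/anti_leq/andP; split.
  by apply/leq_sizeP => i le_n_i; rewrite coef_deriv coef_dickson_gt ?mul0rn.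
rewrite -{1}(prednK n_gt0) ltnNge; apply/negP => /leq_sizeP/(_ n.-1 (leqnn _)).
by rewrite coef_deriv prednK // coef_dickson_deg // => /eqP; rewrite natrF_eq0; lia.
Qed.

Local Notation D := (dickson n a).
Local Notation Q := (dickson_invariant a n (dickson n a)).

Lemma dickson_invariant_const : Q = (Q`_0)%:P.
Proof.
apply: deriv_eq0_polyC => //.
by rewrite deriv_dickson_invariant dickson_ode mulr0 scaler0.
Qed.

Lemma dickson_invariant_coef0_neq0 : a != 0 -> (0 < n)%N -> Q`_0 != 0.
Proof.
move=> a_neq0 n_gt0; have c_neq0 := dickson_coef_neq0 a_neq0 n_gt0 (leqnn n./2).
rewrite -horner_coef0 !hornerE !horner_coef0 coef_deriv !coef_dickson_low //.
have nn_neq0 : (n * n)%:R != 0 :> F by rewrite natrF_eq0 muln_eq0; lia.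
have four_a_neq0 : 4 * a != 0 by rewrite mulf_neq0 // natrF_eq0.
case: (odd n) => /=; rewrite expr0n /= !mulr1n ?mul0rn !mulr0 ?mul0r.
  by rewrite subr0 sub0r !mulNr oppr_eq0 (mulf_neq0 (mulf_neq0 four_a_neq0 c_neq0)).
by rewrite sub0r oppr_eq0 (mulf_neq0 (mulf_neq0 nn_neq0 c_neq0)).
Qed.

Lemma horner_dickson_ode z :
  (z ^+ 2 - 4 * a) * D^`()^`().[z] + z * D^`().[z] - (n * n)%:R * D.[z] = 0.
Proof. by have := congr1 (horner^~ z) dickson_ode; rewrite /dickson_op !hornerE. Qed.

Lemma horner_dickson_invariant z :
  (z ^+ 2 - 4 * a) * D^`().[z] ^+ 2 - (n * n)%:R * D.[z] ^+ 2 = Q`_0.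
Proof.
have := congr1 (horner^~ z) dickson_invariant_const.
by rewrite /dickson_invariant !hornerE.
Qed.

Lemma dickson_crit_value_sqr z : (0 < n)%N -> root D^`() z ->
  D.[z] ^+ 2 = - Q`_0 / (n * n)%:R.
Proof.
move=> n_gt0 /eqP D'z; have nn_neq0 : (n * n)%:R != 0 :> F by rewrite natrF_eq0 muln_eq0; lia.
rewrite -(horner_dickson_invariant z) D'z.
by rewrite expr0n mulr0 sub0r opprK mulrC mulKf.
Qed.

Lemma dickson_crit_simple z : a != 0 -> (0 < n)%N -> root D^`() z -> D^`()^`().[z] != 0.
Proof.
move=> a_neq0 n_gt0 /eqP D'z; apply/eqP => D''z.
have nn_neq0 : (n * n)%:R != 0 :> F by rewrite natrF_eq0 muln_eq0; lia.
have /eqP := horner_dickson_ode z; rewrite D'z D''z !mulr0 !add0r oppr_eq0 mulf_eq0.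
rewrite (negPf nn_neq0) /= => /eqP Dz.
have := horner_dickson_invariant z; rewrite D'z Dz expr0n !mulr0 subr0 => /esym Q0_eq0.
by move: (dickson_invariant_coef0_neq0 a_neq0 n_gt0); rewrite Q0_eq0 eqxx.
Qed.

End DicksonChar0.

Lemma map_dickson (K L : fieldType) (f : {rmorphism K -> L}) (a : K) n :
  map_poly f (dickson n a) = dickson n (f a).
Proof.
rewrite /dickson rmorph_sum; apply: eq_bigr => j _.
by rewrite /= map_polyZ map_polyXn !rmorphM fmorphV !rmorph_nat rmorphXn rmorphN.
Qed.

Lemma closed_field_simple_roots (L : closedFieldType) (p : {poly L}) :
  p != 0 -> {in root p, forall x, p^`().[x] != 0} ->
  exists r : seq L, [/\ uniq r, size r = (size p).-1 & forall x, root p x = (x \in r)].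
Proof.
move=> p_neq0 simple_p; have [r def_p] := closed_field_poly_normal p.
have lc_neq0 : lead_coef p != 0 by rewrite lead_coef_eq0.
exists r; split.
- have : separable_poly p by rewrite unlock; exact: Pdiv.ClosedField.root_coprimep.
  by rewrite def_p (eqp_separable (eqp_scale _ lc_neq0)) separable_prod_XsubC.
- by rewrite def_p size_scale // size_prod_XsubC.
- by move=> x; rewrite def_p rootZ // root_prod_XsubC.
Qed.

Lemma sqr_const_pigeonhole (R : idomainType) (T : eqType) (g : T -> R) (r : seq T) c m :
  uniq r -> (2 * m - 1 <= size r)%N -> {in r, forall z, g z ^+ 2 = c} ->
  exists s : seq T, [/\ uniq s, {subset s <= r}, (m <= size s)%N &
                        {in s &, forall x y, g x = g y}].
Proof.
move=> uniq_r size_r sqr_r.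
suff [P [y ge_m const_P]] : exists P : pred T,
    exists2 y, (m <= count P r)%N & {in filter P r, forall x, g x = y}.
  exists (filter P r); split; rewrite ?filter_uniq ?size_filter //.
    by move=> x; rewrite mem_filter => /andP[].
  by move=> x x' /const_P -> /const_P ->.
case: r size_r sqr_r {uniq_r} => [|z0 r'] size_r sqr_r.
  by exists pred0, 0 => //; move: size_r => /=; lia.
set r := z0 :: r' in size_r sqr_r *.
pose same z := g z == g z0; have := count_predC same r.
have [ge_m _|lt_m size_other] := leqP m (count same r).
  by exists same, (g z0) => // x; rewrite mem_filter => /andP[/eqP].
exists (predC same), (- g z0) => [|x]; first lia.
rewrite mem_filter => /andP[/= x_other xr]; apply/eqP.
have /eqP := sqr_r x xr; rewrite -(sqr_r z0) ?inE ?eqxx //.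
by rewrite eqf_sqr (negPf x_other : (g x == g z0) = false).
Qed.

Lemma dickson_equal_crit_values (L : closedFieldType) (a : L) n m :
  [pchar L] =i pred0 -> a != 0 -> (0 < m)%N -> (2 * m <= n)%N ->
  exists s : seq L, [/\ uniq s, all (root (dickson n a)^`()) s, (m <= size s)%N &
                        {in s &, forall x y, (dickson n a).[x] = (dickson n a).[y]}].
Proof.
move=> charL a_neq0 m_gt0 le_2m_n; have n_gt0 : (0 < n)%N by lia.
have D'_neq0 : (dickson n a)^`() != 0.
  by rewrite -size_poly_eq0 size_deriv_dickson //; lia.
have [r [uniq_r size_r root_r]] := closed_field_simple_roots D'_neq0
  (fun z => dickson_crit_simple charL a_neq0 n_gt0).
have sqr_r : {in r, forall z, (dickson n a).[z] ^+ 2 = _} := fun z zr =>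
  dickson_crit_value_sqr charL n_gt0 (etrans (root_r z) zr).
have [|s [uniq_s sub_s size_s const_s]] := sqr_const_pigeonhole (m := m) uniq_r _ sqr_r.
  by rewrite size_r size_deriv_dickson //; lia.
by exists s; split => //; apply/allP => x /sub_s; rewrite root_r.
Qed.

Unset Implicit Arguments.
Theorem corollary2p2 (K : fieldType) (hK : [pchar K] =i pred0) (a : K)
  (ha : a != 0) (n : nat) (L : closedFieldType) (f : {rmorphism K -> L}) :
  let D := map_poly f (dickson n a) in
  ((4 <= n)%N ->
  (exists x1 x2 : L, [/\ x1 != x2, root D^`() x1, root D^`() x2
                        & D.[x1] = D.[x2]])) /\
  ((6 <= n)%N ->
  (exists x1 x2 x3 : L,
     [/\ [&& x1 != x2, x1 != x3 & x2 != x3],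
         [&& root D^`() x1, root D^`() x2 & root D^`() x3],
         D.[x1] = D.[x2] & D.[x2] = D.[x3]])).
Proof.
move=> D; rewrite {}/D map_dickson.
have charL : [pchar L] =i pred0 by move=> p; rewrite (fmorph_pchar f) hK.
have fa_neq0 : f a != 0 by rewrite fmorph_eq0.
have crit_values m := @dickson_equal_crit_values L (f a) n m charL fa_neq0.
split => le_n.
  case: (crit_values 2%N isT le_n) => -[|x1 [|x2 s]]
    [//= uniq_s /and3P[crit1 crit2 _] _ const_s].
  exists x1, x2; split => //; last by apply: const_s; rewrite !inE eqxx ?orbT.
  by move: uniq_s; rewrite inE negb_or => /andP[/andP[]].
case: (crit_values 3%N isT le_n) => -[|x1 [|x2 [|x3 s]]]
  [//= uniq_s /and4P[crit1 crit2 crit3 _] _ const_s].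
exists x1, x2, x3; split; rewrite ?crit1 ?crit2 ?crit3 //.
- by move: uniq_s; rewrite !inE !negb_or => /and3P[/and3P[-> -> _] /andP[-> _] _].
- by apply: const_s; rewrite !inE eqxx ?orbT.
- by apply: const_s; rewrite !inE eqxx ?orbT.
Qed.
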